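(* Let $Q=ABA'B'$ be a quadrilateral in $K^2$ (possibly improper), let $(h,k)$ be the centroid of $Q$, and let $(a,b)\in K^2$ be a diagonal point of $Q$ that is not at infinity. Then the bisector locus of $Q$ is given by $$\Phi_Q(X-h,Y-k)=\Phi_Q(a-h,b-k),$$ i.e. it is the set of $(x,y)\in K^2$ with $\Phi_Q(x-h,y-k)=\Phi_Q(a-h,b-k)$. Thus the bisector locus is a conic with center $(h,k)$.
   Context: $K$ is a field of characteristic $\neq 2$, and we work in the affine plane $K^2$ (regarded inside the projective plane, so lines have points at infinity). Every line $L$ has an equation $tX-uY+v=0$ normalized so that $t=1$ if $u=0$ and $u=1$ if $u\neq 0$; these coefficients are denoted $t_L,u_L,v_L$. A quadrilateral $Q=ABA'B'$ consists of four distinct lines $A,B,A',B'$ (the sides), not all through one point, such that adjacent sides ($A,B$; $B,A'$; $A',B'$; $B',A$) are not parallel; opposite sides ($A,A'$ and $B,B'$) may be parallel. The vertices are $A\cap B$, $B\cap A'$, $A'\cap B'$, $B'\cap A$; three sides may pass through a common point (then two vertices coincide and $Q$ is called improper; otherwise proper). The diagonals are the lines through nonadjacent vertices ($A\cap B$ and $A'\cap B'$; $B\cap A'$ and $B'\cap A$). The centroid is the midpoint of the midpoints of the diagonals (equivalently, the average of the four vertices). A diagonal point of $Q$ is the intersection point (possibly at infinity) of a pair of opposite sides or of the two diagonals. Define $\alpha=t_Au_Bu_{A'}u_{B'}-u_At_Bu_{A'}u_{B'}+u_Au_Bt_{A'}u_{B'}-u_Au_Bu_{A'}t_{B'}$,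 $\beta=t_Au_Bt_{A'}u_{B'}-u_At_Bu_{A'}t_{B'}$, $\gamma=t_At_Bt_{A'}u_{B'}-t_At_Bu_{A'}t_{B'}+t_Au_Bt_{A'}t_{B'}-u_At_Bt_{A'}t_{B'}$, and the quadratic form $\Phi_Q(X,Y)=\gamma X^2-2\beta XY+\alpha Y^2$. A line $\ell$ crosses a pair of lines $\{\ell_1,\ell_2\}$ if $\ell$ is distinct from both and not parallel to both; then $\mathrm{mid}_{\{\ell_1,\ell_2\}}(\ell)$ is the midpoint of the two points where $\ell$ meets $\ell_1$ and $\ell_2$, except that if one of these points is at infinity it is defined to be the point at infinity of $\ell$. A line $\ell$ bisects $Q$ if $\mathrm{mid}_{\mathsf P}(\ell)=\mathrm{mid}_{\mathsf P'}(\ell)$ for all pairs $\mathsf P,\mathsf P'$ among the two pairs of opposite sides $\{A,A'\},\{B,B'\}$ that $\ell$ crosses; this common point is the midpoint $\mathrm{mid}_Q(\ell)$ of the bisector $\ell$. The bisector locus of $Q$ is the set of midpoints of the bisectors of $Q$. *)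

From HB Require Import structures.
From mathcomp Require Import all_boot all_order all_algebra.
Set Implicit Arguments. Unset Strict Implicit. Unset Printing Implicit Defensive.
Import Order.TTheory GRing.Theory Num.Theory.
Local Open Scope ring_scope.

Section Geometry.
Variable K : fieldType.

(* A line  t X - u Y + v = 0  with the normalization of the paper:
   t = 1 if u = 0, and u = 1 if u <> 0. Normalized coefficients are unique,
   so equality of lines is equality of records. *)
Record line := Line {
  lt : K; lu : K; lv : K;
  line_norm : ((lu == 0) && (lt == 1)) || (lu == 1) }.

Definition point := (K * K)%type.

Definition on_line (p : point) (L : line) : Prop :=
  lt L * p.1 - lu L * p.2 + lv L = 0.

(* parallel (in the weak sense: identical lines are parallel) *)
Definition parallel (L1 L2 : line) : Prop := lt L1 * lu L2 = lt L2 * lu L1.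

(* intersection point of two non-parallel lines (Cramer's rule) *)
Definition meet (L1 L2 : line) : point :=
  let D := lu L1 * lt L2 - lt L1 * lu L2 in
  ((lv L1 * lu L2 - lu L1 * lv L2) / D, (lt L2 * lv L1 - lt L1 * lv L2) / D).

(* intersection in the projective plane: [None] = a point at infinity *)
Definition meetP (L1 L2 : line) : option point :=
  if lt L1 * lu L2 == lt L2 * lu L1 then None else Some (meet L1 L2).

Definition midpoint (p q : point) : point :=
  ((p.1 + q.1) / 2%:R, (p.2 + q.2) / 2%:R).

Definition crosses (l : line) (P : line * line) : Prop :=
  l <> P.1 /\ l <> P.2 /\ ~ (parallel l P.1 /\ parallel l P.2).

(* mid_{P}(l): [Some m] for a finite midpoint, [None] for the point at
   infinity of l (used when one of the intersection points is at infinity). *)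
Definition mid (P : line * line) (l : line) : option point :=
  match meetP l P.1, meetP l P.2 with
  | Some p, Some q => Some (midpoint p q)
  | _, _ => None
  end.

Definition quadrilateral (A B A' B' : line) : Prop :=
  [/\ A <> B, A <> A', A <> B' & B <> A'] /\ B <> B' /\ A' <> B' /\
  ~ (exists p, [/\ on_line p A, on_line p B, on_line p A' & on_line p B']) /\
  [/\ ~ parallel A B, ~ parallel B A', ~ parallel A' B' & ~ parallel B' A].

Definition opp_pair (A B A' B' : line) (b : bool) : line * line :=
  if b then (A, A') else (B, B').

Definition bisects (A B A' B' : line) (l : line) : Prop :=
  forall P P' : bool,
    crosses l (opp_pair A B A' B' P) -> crosses l (opp_pair A B A' B' P') ->
    mid (opp_pair A B A' B' P) l = mid (opp_pair A B A' B' P') l.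

Definition bisector_locus (A B A' B' : line) : point -> Prop :=
  fun m => exists l : line, bisects A B A' B' l /\
    exists P : bool, crosses l (opp_pair A B A' B' P) /\
                     mid (opp_pair A B A' B' P) l = Some m.

Definition centroid (A B A' B' : line) : point :=
  let V := [:: meet A B; meet B A'; meet A' B'; meet B' A] in
  ((\sum_(p <- V) p.1) / 4%:R, (\sum_(p <- V) p.2) / 4%:R).

Definition on_line_through (p q r : point) : Prop :=
  (r.1 - q.1) * (p.2 - q.2) = (r.2 - q.2) * (p.1 - q.1).

Definition diagonal_point (A B A' B' : line) (p : point) : Prop :=
  (on_line p A /\ on_line p A') \/ (on_line p B /\ on_line p B') \/
  (on_line_through p (meet A B) (meet A' B') /\
   on_line_through p (meet B A') (meet B' A)).

Definition alphaQ (A B A' B' : line) : K :=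
  lt A * lu B * lu A' * lu B' - lu A * lt B * lu A' * lu B'
  + lu A * lu B * lt A' * lu B' - lu A * lu B * lu A' * lt B'.
Definition betaQ (A B A' B' : line) : K :=
  lt A * lu B * lt A' * lu B' - lu A * lt B * lu A' * lt B'.
Definition gammaQ (A B A' B' : line) : K :=
  lt A * lt B * lt A' * lu B' - lt A * lt B * lu A' * lt B'
  + lt A * lu B * lt A' * lt B' - lu A * lt B * lt A' * lt B'.

Definition PhiQ (A B A' B' : line) (X Y : K) : K :=
  gammaQ A B A' B' * X ^+ 2 - 2%:R * betaQ A B A' B' * X * Y
  + alphaQ A B A' B' * Y ^+ 2.

End Geometry.

From HB Require Import structures.
From mathcomp Require Import all_boot all_order all_algebra.
From mathcomp Require Import ring.
Import GRing.Theory.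
Local Open Scope ring_scope.
Set Implicit Arguments. Unset Strict Implicit.

(* Write f_L for the equation of a line L. Parametrising a line l through m as
   m + s (lu l, lt l), the product f_L1 f_L2 becomes a quadratic in s whose
   roots are l ∩ L1 and l ∩ L2, so m is their midpoint iff the derivative of
   f_L1 f_L2 along l vanishes at m. Hence m is the midpoint of a bisector iff
   the gradients (prod_dx, prod_dy) of f_A f_A' and f_B f_B' at m are linearly
   dependent, i.e. iff their determinant P(m) vanishes. P has quadratic part
   -2 Phi_Q and is symmetric about the centroid c, so P(m) = P(c) - 2 Phi_Q(m - c);
   finally P vanishes at every diagonal point. *)

Definition line_coefs (K : fieldType) (L : line K) := (lt L, lu L, lv L).

Lemma line_coefs_inj (K : fieldType) : injective (@line_coefs K).
Proof.
case=> t u v n [t' u' v' n'] [ett euu evv].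
by move: n n'; rewrite ett euu evv => n n'; rewrite (bool_irrelevance n n').
Qed.

HB.instance Definition _ (K : fieldType) :=
  Equality.copy (line K) (inj_type (@line_coefs_inj K)).

Lemma det2_eq0_of_kernel (K : fieldType) (a b c d p q : K) :
  (p != 0) || (q != 0) -> a * p + b * q = 0 -> c * p + d * q = 0 -> a * d - b * c = 0.
Proof.
move=> pq e1 e2.
have Ep : p * (a * d - b * c) = d * (a * p + b * q) - b * (c * p + d * q) by ring.
have Eq : q * (a * d - b * c) = a * (c * p + d * q) - c * (a * p + b * q) by ring.
rewrite e1 e2 !mulr0 subrr in Ep Eq; apply/eqP.
by case/orP: pq => nz; [move/eqP: Ep | move/eqP: Eq]; rewrite mulf_eq0 (negbTE nz).
Qed.

Lemma det2_kernel (K : fieldType) (a b c d : K) : a * d - b * c = 0 ->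
  exists p q : K, [/\ (p != 0) || (q != 0), a * p + b * q = 0 & c * p + d * q = 0].
Proof.
move=> D.
have [ab | /norP[/negbNE/eqP b0 /negbNE/eqP a0]] := boolP ((b != 0) || (a != 0)).
  by exists (- b), a; split; rewrite ?oppr_eq0 //; [ring | rewrite -D; ring].
have [dc | /norP[/negbNE/eqP d0 /negbNE/eqP c0]] := boolP ((d != 0) || (c != 0)).
  by exists d, (- c); split; rewrite ?oppr_eq0 //; [rewrite -D; ring | ring].
by exists 1, 0; rewrite oner_eq0 a0 b0 c0 d0; split; rewrite ?mul0r ?addr0.
Qed.

Lemma det2_eq0_of_scaled (K : fieldType) (a b c d x y : K) :
  (x != 0) || (y != 0) -> x * a = y * c -> x * b = y * d -> a * d - b * c = 0.
Proof.
move=> xy ea eb.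
have xy' : (x != 0) || (- y != 0) by rewrite oppr_eq0.
have e1 : a * x + c * - y = 0 by rewrite mulrN mulrC ea mulrC subrr.
have e2 : b * x + d * - y = 0 by rewrite mulrN mulrC eb mulrC subrr.
by rewrite -(det2_eq0_of_kernel xy' e1 e2) mulrC [c * b]mulrC.
Qed.

Section Bisectors.
Variable K : fieldType.
Implicit Types (l L : line K) (m p : point K).

Definition leval L p := lt L * p.1 - lu L * p.2 + lv L.

Definition cross_det (L1 L2 : line K) := lu L1 * lt L2 - lt L1 * lu L2.

(* The determinant of the coefficient vectors (t, -u, v) of the three lines. *)
Definition det3 (L1 L2 L3 : line K) :=
  lt L1 * (lu L3 * lv L2 - lu L2 * lv L3) + lu L1 * (lt L2 * lv L3 - lt L3 * lv L2)
  + lv L1 * (lt L3 * lu L2 - lt L2 * lu L3).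

Definition prod_dx (L1 L2 : line K) m := lt L1 * leval L2 m + lt L2 * leval L1 m.
Definition prod_dy (L1 L2 : line K) m := - (lu L1 * leval L2 m + lu L2 * leval L1 m).

Definition prod_deriv (L1 L2 : line K) l m :=
  prod_dx L1 L2 m * lu l + prod_dy L1 L2 m * lt l.

Definition bisector_poly (A B A' B' : line K) m :=
  prod_dx A A' m * prod_dy B B' m - prod_dy A A' m * prod_dx B B' m.

Lemma line_dir_neq0 l : (lu l != 0) || (lt l != 0).
Proof. by case: l => t u v /= /orP[/andP[_ /eqP->] | /eqP->]; rewrite oner_eq0 ?orbT. Qed.

Lemma parallelE (L1 L2 : line K) : parallel L1 L2 <-> cross_det L1 L2 = 0.
Proof.
rewrite /parallel /cross_det; split => [-> | /eqP]; first by ring.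
by rewrite subr_eq0 => /eqP E; rewrite -E mulrC.
Qed.

Lemma cross_det_neq0 (L1 L2 : line K) : ~ parallel L1 L2 -> cross_det L1 L2 != 0.
Proof. by move=> npar; apply/eqP => /parallelE. Qed.

Lemma parallel_sym (L1 L2 : line K) : parallel L1 L2 -> parallel L2 L1.
Proof. by rewrite /parallel => ->. Qed.

Lemma parallel_trans l (L1 L2 : line K) : parallel l L1 -> parallel l L2 -> parallel L1 L2.
Proof.
rewrite /parallel; case/orP: (line_norm l) => [/andP[/eqP-> /eqP->] | /eqP->].
- by rewrite !mul1r !mulr0 => -> ->; rewrite !mulr0.
- by rewrite !mulr1 => <- <-; rewrite mulrAC.
Qed.

Lemma parallel_on_eq l L m : parallel l L -> on_line m l -> on_line m L -> l = L.
Proof.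
rewrite /parallel /on_line => par ml mL; apply: line_coefs_inj; rewrite /line_coefs.
case/orP: (line_norm l) => [/andP[/eqP ul /eqP tl] | /eqP ul];
case/orP: (line_norm L) => [/andP[/eqP uL /eqP tL] | /eqP uL];
rewrite ?ul ?tl ?uL ?tL in par ml mL *.
- by move/esym: mL => /(etrans ml)/addrI ->.
- by move: par; rewrite mulr0 mulr1 => /eqP; rewrite oner_eq0.
- by move: par; rewrite mulr0 mulr1 => /eqP; rewrite eq_sym oner_eq0.
- rewrite !mulr1 in par; rewrite par in ml *.
  by move/esym: mL => /(etrans ml)/addrI ->.
Qed.

Lemma leval_meet (L1 L2 L3 : line K) :
  ~ parallel L1 L2 -> leval L3 (meet L1 L2) = det3 L1 L2 L3 / cross_det L1 L2.
Proof.
move/cross_det_neq0; rewrite /leval /meet /det3 /cross_det /= => D.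
by field.
Qed.

Lemma on_meetl (L1 L2 : line K) : ~ parallel L1 L2 -> on_line (meet L1 L2) L1.
Proof.
move=> npar; have := leval_meet L1 npar.
by rewrite (_ : det3 L1 L2 L1 = 0) ?mul0r //; rewrite /det3; ring.
Qed.

Lemma on_meetr (L1 L2 : line K) : ~ parallel L1 L2 -> on_line (meet L1 L2) L2.
Proof.
move=> npar; have := leval_meet L2 npar.
by rewrite (_ : det3 L1 L2 L2 = 0) ?mul0r //; rewrite /det3; ring.
Qed.

Lemma on_meet_det3 (L1 L2 L3 : line K) :
  ~ parallel L1 L2 -> det3 L1 L2 L3 = 0 -> on_line (meet L1 L2) L3.
Proof. by move=> npar D; have := leval_meet L3 npar; rewrite D mul0r. Qed.

Lemma det3_cycle (L1 L2 L3 : line K) : det3 L1 L2 L3 = det3 L2 L3 L1.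
Proof. by rewrite /det3; ring. Qed.

Lemma crosses_cases l (L1 L2 : line K) :
  crosses l (L1, L2) \/ [\/ l = L1, l = L2 | parallel l L1 /\ parallel l L2].
Proof.
have [->|nl1] := eqVneq l L1; first by right; apply: Or31.
have [->|nl2] := eqVneq l L2; first by right; apply: Or32.
case: (boolP ((lt l * lu L1 == lt L1 * lu l) && (lt l * lu L2 == lt L2 * lu l))).
  by case/andP=> /eqP p1 /eqP p2; right; apply: Or33.
move=> npar; left; split; first exact/eqP.
split; first exact/eqP.
by case=> p1 p2; rewrite p1 p2 !eqxx in npar.
Qed.

Lemma prod_derivE (L1 L2 : line K) l m :
  prod_deriv L1 L2 l m = leval L1 m * cross_det l L2 + leval L2 m * cross_det l L1.
Proof. by rewrite /prod_deriv /prod_dx /prod_dy /cross_det; ring. Qed.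

Hypothesis two_neq0 : (2%:R : K) != 0.

Lemma on_midpoint_meet l (L1 L2 : line K) : ~ parallel l L1 -> ~ parallel l L2 ->
  on_line (midpoint (meet l L1) (meet l L2)) l.
Proof.
move=> /cross_det_neq0 D1 /cross_det_neq0 D2; move: D1 D2.
rewrite /on_line /midpoint /meet /cross_det /= => D1 D2.
by field; rewrite D1 D2 two_neq0.
Qed.

Lemma midpoint_meetE l (L1 L2 : line K) m :
  ~ parallel l L1 -> ~ parallel l L2 -> on_line m l ->
  let k := prod_deriv L1 L2 l m / (2%:R * cross_det l L1 * cross_det l L2) in
  midpoint (meet l L1) (meet l L2) = (m.1 - k * lu l, m.2 - k * lt l).
Proof.
move=> /cross_det_neq0 D1 /cross_det_neq0 D2 ml k.
have lvE : lv l = lu l * m.2 - lt l * m.1.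
  by rewrite -[lv l](addKr (lt l * m.1 - lu l * m.2)) ml addr0 opprB.
move: D1 D2; rewrite /k prod_derivE /midpoint /meet lvE /leval /cross_det /= => D1 D2.
by congr pair; field; rewrite D1 D2 two_neq0.
Qed.

Lemma midpoint_meet_eq l (L1 L2 : line K) m :
  ~ parallel l L1 -> ~ parallel l L2 -> on_line m l ->
  midpoint (meet l L1) (meet l L2) = m <-> prod_deriv L1 L2 l m = 0.
Proof.
move=> p1 p2 ml; rewrite (midpoint_meetE p1 p2 ml).
have den : 2%:R * cross_det l L1 * cross_det l L2 != 0.
  by rewrite !mulf_neq0 ?cross_det_neq0.
have kE : prod_deriv L1 L2 l m / (2%:R * cross_det l L1 * cross_det l L2) = 0
          <-> prod_deriv L1 L2 l m = 0.
  split=> [/eqP | ->]; last by rewrite mul0r.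
  by rewrite mulf_eq0 invr_eq0 (negbTE den) orbF => /eqP.
rewrite -kE; move: (_ / _) => k; case: m {ml kE} => x y /=.
split=> [[] | ->]; last by rewrite !mul0r !subr0.
rewrite -{2}[x]subr0 -{2}[y]subr0 => /addrI/oppr_inj/eqP ku /addrI/oppr_inj/eqP kt.
apply/eqP; case/orP: (line_dir_neq0 l) => nz; [move: ku | move: kt].
all: by rewrite mulf_eq0 (negbTE nz) orbF.
Qed.

Lemma mid_SomeE (L1 L2 : line K) l m :
  mid (L1, L2) l = Some m -> on_line m l /\ prod_deriv L1 L2 l m = 0.
Proof.
rewrite /mid /meetP /=; case: eqP => // p1; case: eqP => // p2 [<-].
have on := on_midpoint_meet p1 p2.
by split; last exact/(midpoint_meet_eq p1 p2 on).
Qed.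

Lemma mid_Some (L1 L2 : line K) l m : crosses l (L1, L2) -> on_line m l ->
  prod_deriv L1 L2 l m = 0 -> mid (L1, L2) l = Some m.
Proof.
move=> [/= nl1 [nl2 npar]] ml dm; rewrite /mid /meetP /=.
case: (lt l * lu L1 =P lt L1 * lu l) => p1; case: (lt l * lu L2 =P lt L2 * lu l) => p2.
- by case: npar.
- move: dm; rewrite prod_derivE (proj1 (parallelE _ _) p1) mulr0 addr0 => /eqP.
  rewrite mulf_eq0 (negbTE (cross_det_neq0 p2)) orbF => /eqP mL1.
  by case: nl1; apply: parallel_on_eq p1 ml mL1.
- move: dm; rewrite prod_derivE (proj1 (parallelE _ _) p2) mulr0 add0r => /eqP.
  rewrite mulf_eq0 (negbTE (cross_det_neq0 p1)) orbF => /eqP mL2.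
  by case: nl2; apply: parallel_on_eq p2 ml mL2.
- by congr Some; apply/midpoint_meet_eq.
Qed.

Lemma prod_deriv_eq0 (L1 L2 : line K) l m : on_line m l ->
  (crosses l (L1, L2) -> mid (L1, L2) l = Some m) -> prod_deriv L1 L2 l m = 0.
Proof.
move=> ml mid_m; have lm : leval l m = 0 := ml.
have [/mid_m/mid_SomeE[] //|] := crosses_cases l L1 L2.
rewrite prod_derivE; case=> [<-|<-|[/parallelE p1 /parallelE p2]].
- by rewrite /cross_det lm mul0r add0r [lu l * _]mulrC subrr mulr0.
- by rewrite /cross_det lm mul0r addr0 [lu l * _]mulrC subrr mulr0.
- by rewrite p1 p2 !mulr0 addr0.
Qed.

Lemma line_through_dir m (p q : K) : (p != 0) || (q != 0) ->
  exists l (k : K), [/\ on_line m l, lu l = k * p & lt l = k * q].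
Proof.
have [p0 /= q0 | p0 _] := eqVneq p 0.
  have n : ((0 : K) == 0) && ((1 : K) == 1) || ((0 : K) == 1) by rewrite !eqxx.
  exists (Line (- m.1) n), q^-1; split => /=; rewrite ?p0 ?mulr0 ?mulVf //.
  by rewrite /on_line /=; ring.
have n : ((1 : K) == 0) && (q / p == 1) || ((1 : K) == 1) by rewrite eqxx orbT.
exists (Line (m.2 - q / p * m.1) n), p^-1; split => /=; rewrite ?mulVf ?[p^-1 * q]mulrC //.
by rewrite /on_line /=; ring.
Qed.

Lemma quadrilateral_crosses (A B A' B' : line K) l : quadrilateral A B A' B' ->
  crosses l (A, A') \/ crosses l (B, B').
Proof.
move=> [[nAB _ nAB' nBA'] [_ [nA'B' [_ [pAB _ pA'B' pB'A]]]]].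
case: (crosses_cases l A A') => [|hA]; first by left.
case: (crosses_cases l B B') => [|hB]; first by right.
exfalso; case: hA => [eA|eA|[pA _]]; case: hB => [eB|eB|[pB pB']].
- by apply: nAB; rewrite -eA -eB.
- by apply: nAB'; rewrite -eA -eB.
- by apply: pAB; rewrite -eA.
- by apply: nBA'; rewrite -eA -eB.
- by apply: nA'B'; rewrite -eA -eB.
- by apply: pA'B'; rewrite -eA.
- by apply: pAB; rewrite -eB; apply: parallel_sym.
- by apply: pB'A; rewrite -eB.
- exact: pAB (parallel_trans pA pB).
Qed.

Lemma bisector_poly_eq0_of_derivs (A B A' B' : line K) l m :
  prod_deriv A A' l m = 0 -> prod_deriv B B' l m = 0 -> bisector_poly A B A' B' m = 0.
Proof. exact: det2_eq0_of_kernel (line_dir_neq0 l). Qed.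

Lemma bisector_locusP (A B A' B' : line K) m : quadrilateral A B A' B' ->
  bisector_locus A B A' B' m <-> bisector_poly A B A' B' m = 0.
Proof.
move=> hQ; split.
- case=> l [bis [[] [/= cP midP]]]; have [ml dP] := mid_SomeE midP.
  + apply: (bisector_poly_eq0_of_derivs dP); apply: prod_deriv_eq0 ml _ => cB.
    by rewrite -midP; apply: (bis false true).
  + apply: (bisector_poly_eq0_of_derivs _ dP); apply: prod_deriv_eq0 ml _ => cA.
    by rewrite -midP; apply: (bis true false).
- case/det2_kernel=> p [q [pq dA dB]]; have [l [k [ml ulE tlE]]] := line_through_dir m pq.
  have derivl (L1 L2 : line K) : prod_dx L1 L2 m * p + prod_dy L1 L2 m * q = 0 ->
      prod_deriv L1 L2 l m = 0.
    move=> e; rewrite /prod_deriv ulE tlE.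
    by rewrite mulrCA [prod_dy _ _ _ * _]mulrCA -mulrDr e mulr0.
  have midl P : crosses l (opp_pair A B A' B' P) -> mid (opp_pair A B A' B' P) l = Some m.
    by case: P => /= cP; apply: mid_Some cP ml _; apply: derivl.
  exists l; split; first by move=> P P' cP cP'; rewrite !midl.
  by case: (quadrilateral_crosses l hQ) => [cA | cB];
    [exists true | exists false]; split => //; apply: midl.
Qed.

Lemma det3_dependence (A B A' B' : line K) :
  [/\ det3 B A' B' * lt A - det3 A A' B' * lt B + det3 A B B' * lt A' - det3 A B A' * lt B' = 0,
      det3 B A' B' * lu A - det3 A A' B' * lu B + det3 A B B' * lu A' - det3 A B A' * lu B' = 0
    & forall p, det3 B A' B' * leval A p - det3 A A' B' * leval B p
                + det3 A B B' * leval A' p - det3 A B A' * leval B' p = 0].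
Proof. by split => [||p]; rewrite /det3 ?/leval; ring. Qed.

Lemma on_line_through_meet (L1 L2 L3 L4 : line K) p :
  ~ parallel L1 L2 -> ~ parallel L3 L4 -> on_line_through p (meet L1 L2) (meet L3 L4) ->
  det3 L1 L2 L4 * leval L3 p = det3 L1 L2 L3 * leval L4 p.
Proof.
move=> /cross_det_neq0 D12 /cross_det_neq0 D34; rewrite /on_line_through => coll.
apply/eqP; rewrite -subr_eq0; apply/eqP.
have -> : det3 L1 L2 L4 * leval L3 p - det3 L1 L2 L3 * leval L4 p =
    cross_det L1 L2 * cross_det L3 L4 *
    (((meet L3 L4).1 - (meet L1 L2).1) * (p.2 - (meet L1 L2).2)
     - ((meet L3 L4).2 - (meet L1 L2).2) * (p.1 - (meet L1 L2).1)).
  by move: D12 D34; rewrite /det3 /leval /meet /cross_det /= => D12 D34; field; rewrite D12 D34.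
by rewrite coll subrr mulr0.
Qed.

Lemma det3_weights_neq0 (A B A' B' : line K) : quadrilateral A B A' B' ->
  (det3 B A' B' * det3 A B B' != 0) || (det3 A A' B' * det3 A B A' != 0).
Proof.
move=> [_ [_ [_ [no_common [pAB pBA' pA'B' pB'A]]]]].
rewrite -negb_and; apply/negP => /andP[]; rewrite !mulf_eq0.
case/orP=> /eqP wA; case/orP=> /eqP wB; apply: no_common.
- exists (meet A' B'); rewrite det3_cycle in wA; rewrite det3_cycle in wB.
  by split; [exact: on_meet_det3 | exact: on_meet_det3 | exact: on_meetl | exact: on_meetr].
- exists (meet B A'); rewrite det3_cycle in wB.
  by split; [exact: on_meet_det3 | exact: on_meetl | exact: on_meetr | exact: on_meet_det3].
- exists (meet B' A); rewrite 2!det3_cycle in wA; rewrite 2!det3_cycle in wB.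
  by split; [exact: on_meetr | exact: on_meet_det3 | exact: on_meet_det3 | exact: on_meetl].
- exists (meet A B).
  by split; [exact: on_meetl | exact: on_meetr | exact: on_meet_det3 | exact: on_meet_det3].
Qed.

Lemma prod_grad_scaled (L1 L2 : line K) m (w1 w2 s : K) :
  w1 * leval L1 m = s -> w2 * leval L2 m = s ->
  w1 * w2 * prod_dx L1 L2 m = s * (w1 * lt L1 + w2 * lt L2) /\
  w1 * w2 * prod_dy L1 L2 m = - (s * (w1 * lu L1 + w2 * lu L2)).
Proof.
move=> e1 e2; rewrite /prod_dx /prod_dy; split.
- have -> : w1 * w2 * (lt L1 * leval L2 m + lt L2 * leval L1 m)
      = w1 * lt L1 * (w2 * leval L2 m) + w2 * lt L2 * (w1 * leval L1 m) by ring.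
  by rewrite e1 e2; ring.
- have -> : w1 * w2 * - (lu L1 * leval L2 m + lu L2 * leval L1 m)
      = - (w1 * lu L1 * (w2 * leval L2 m) + w2 * lu L2 * (w1 * leval L1 m)) by ring.
  by rewrite e1 e2; ring.
Qed.

(* At a diagonal point d, the weights w_X of the linear dependence of the four
   sides make all the products w_X * f_X(d) equal, which makes the two
   gradients proportional. *)
Lemma bisector_poly_diagonal (A B A' B' : line K) d : quadrilateral A B A' B' ->
  diagonal_point A B A' B' d -> bisector_poly A B A' B' d = 0.
Proof.
move=> hQ; have [_ [_ [_ [_ [pAB pBA' pA'B' pB'A]]]]] := hQ.
case=> [[eA eA'] | [[eB eB'] | [diag1 diag2]]].
- by move: eA eA'; rewrite /bisector_poly /prod_dx /prod_dy /leval /on_line => -> ->; ring.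
- by move: eB eB'; rewrite /bisector_poly /prod_dx /prod_dy /leval /on_line => -> ->; ring.
have [dep_t dep_u dep] := det3_dependence A B A' B'.
set wA := det3 B A' B' in dep_t dep_u dep *; set wB := det3 A A' B' in dep_t dep_u dep *.
set wA' := det3 A B B' in dep_t dep_u dep *; set wB' := det3 A B A' in dep_t dep_u dep *.
set s := wA * leval A d.
have sB' : wB' * leval B' d = s.
  by rewrite /wB' /s /wA (det3_cycle A B A') (on_line_through_meet pBA' pB'A diag2).
have sA' : wA' * leval A' d = s by rewrite (on_line_through_meet pAB pA'B' diag1).
have sB : wB * leval B d = s.
  by have := dep d; rewrite -/s sA' sB' addrK => /eqP; rewrite subr_eq0 => /eqP.
have [xA yA] := prod_grad_scaled (erefl s) sA'.
have [xB yB] := prod_grad_scaled sB sB'.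
apply: (det2_eq0_of_scaled (det3_weights_neq0 hQ)).
- rewrite xA xB; congr (_ * _); apply/eqP; rewrite -subr_eq0 -dep_t; apply/eqP; ring.
- rewrite yA yB; congr (- (_ * _)); apply/eqP; rewrite -subr_eq0 -dep_u; apply/eqP; ring.
Qed.

Lemma bisector_poly_parallelogram (A B A' B' : line K) p (x y : K) :
  bisector_poly A B A' B' (p.1 + x, p.2 + y) + bisector_poly A B A' B' (p.1 - x, p.2 - y)
  = 2%:R * bisector_poly A B A' B' p - 4%:R * PhiQ A B A' B' x y.
Proof.
rewrite /bisector_poly /prod_dx /prod_dy /leval /PhiQ /alphaQ /betaQ /gammaQ /=; ring.
Qed.

Lemma bisector_poly_centroid_sym (A B A' B' : line K) (x y : K) :
  ~ parallel A B -> ~ parallel B A' -> ~ parallel A' B' -> ~ parallel B' A ->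
  let c := centroid A B A' B' in
  bisector_poly A B A' B' (c.1 + x, c.2 + y) = bisector_poly A B A' B' (c.1 - x, c.2 - y).
Proof.
move=> /cross_det_neq0 D1 /cross_det_neq0 D2 /cross_det_neq0 D3 /cross_det_neq0 D4 /=.
have four_neq0 : (4%:R : K) != 0 by rewrite (natrM K 2 2) mulf_neq0.
move: D1 D2 D3 D4; rewrite /centroid /= !big_cons !big_nil /cross_det.
rewrite /bisector_poly /prod_dx /prod_dy /leval /meet /= => D1 D2 D3 D4.
by field; rewrite four_neq0 D1 D2 D3 D4.
Qed.

Lemma bisector_poly_centroid (A B A' B' : line K) m : quadrilateral A B A' B' ->
  let c := centroid A B A' B' in
  bisector_poly A B A' B' m
  = bisector_poly A B A' B' c - 2%:R * PhiQ A B A' B' (m.1 - c.1) (m.2 - c.2).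
Proof.
move=> [_ [_ [_ [_ [pAB pBA' pA'B' pB'A]]]]] c; set P := bisector_poly A B A' B'.
have := bisector_poly_parallelogram A B A' B' c (m.1 - c.1) (m.2 - c.2).
rewrite -(bisector_poly_centroid_sym _ _ pAB pBA' pA'B' pB'A) -/c -/P.
have -> : (c.1 + (m.1 - c.1), c.2 + (m.2 - c.2)) = m.
  by rewrite [c.1 + _]addrC [c.2 + _]addrC !subrK; case: m.
move=> E; apply: (mulfI two_neq0); transitivity (P m + P m); first by ring.
by rewrite E; ring.
Qed.

End Bisectors.

Theorem theorem5p1 (K : fieldType) (char2 : (2%:R : K) != 0)
  (A B A' B' : line K) (a b : K) :
  quadrilateral A B A' B' ->
  diagonal_point A B A' B' (a, b) ->
  let c := centroid A B A' B' in
  forall x y : K,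
    bisector_locus A B A' B' (x, y) <->
    PhiQ A B A' B' (x - c.1) (y - c.2) = PhiQ A B A' B' (a - c.1) (b - c.2).
Proof.
move=> hQ hd c x y; rewrite (bisector_locusP char2 _ hQ) -{1}(bisector_poly_diagonal hQ hd).
rewrite (bisector_poly_centroid char2 (x, y) hQ) (bisector_poly_centroid char2 (a, b) hQ) -/c.
by split=> [/addrI/oppr_inj/(mulfI char2) | ->].
Qed.
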